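(* For all closed closures $(t,e)$ and $(s,d)$, $(t, e) \approx_{\mathrm{app}} (s, d)$ if and only if $\langle t, e, []\rangle_{\mathrm{ev}} \approx \langle s, d, []\rangle_{\mathrm{ev}}$, where $\approx$ is machine bisimilarity on configurations of the AB machine.
   Context: De Bruijn terms $t,s ::= n \mid t\,s \mid \lambda.t$ ($n\in\mathbb N$); closures $\sigma ::= (t,e)$; environments $e,d ::= \sigma :: e \mid \varepsilon$; stacks $\pi ::= \sigma::\pi \mid []$; application stacks $\rho ::= (t,\kappa)::\rho \mid \epsilon$ with $\kappa\in\mathbb N$. A term is closed if it has no free indices; a closure $(t,e)$ is closed if the length of $e$ exceeds the largest free index of $t$ and all closures in $e$ are closed. AB machine configurations: $\langle t, e, \pi\rangle_{\mathrm{ev}}$, $\langle n, \rho, \sigma\rangle_{\mathrm{ind}}$, $\langle t, \kappa, \rho, \sigma\rangle_{\mathrm{tm}}$. Transitions (labelled by $\tau$ or by a flag): $\langle t\,s, e, \pi\rangle_{\mathrm{ev}} \xrightarrow\tau \langle t, e, (s,e)::\pi\rangle_{\mathrm{ev}}$; $\langle 0, (t,e)::d, \pi\rangle_{\mathrm{ev}}\xrightarrow\tau\langle t,e,\pi\rangle_{\mathrm{ev}}$; $\langle n+1, (t,e)::d,\pi\rangle_{\mathrm{ev}} \xrightarrow\tau\langle n, d,\pi\rangle_{\mathrm{ev}}$; $\langle\lambda.t, e, \sigma::\pi\rangle_{\mathrm{ev}} \xrightarrow\tau \langle t, \sigma::e,\pi\rangle_{\mathrm{ev}}$; $\langle \lambda.t,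 e, []\rangle_{\mathrm{ev}} \xrightarrow{\mathsf{arg}} \langle 0, \epsilon, (t,e)\rangle_{\mathrm{ind}}$; $\langle n,\rho,\sigma\rangle_{\mathrm{ind}}\xrightarrow{\mathsf{suc}}\langle n+1,\rho,\sigma\rangle_{\mathrm{ind}}$; $\langle n,\rho,\sigma\rangle_{\mathrm{ind}}\xrightarrow{\mathsf{var}}\langle n, n+1,\rho,\sigma\rangle_{\mathrm{tm}}$; $\langle t,\kappa+1,\rho,\sigma\rangle_{\mathrm{tm}}\xrightarrow{\mathsf{lam}}\langle\lambda.t,\kappa,\rho,\sigma\rangle_{\mathrm{tm}}$; $\langle t,0,\rho,\sigma\rangle_{\mathrm{tm}}\xrightarrow{\mathsf{lam}}\langle\lambda.t,0,\rho,\sigma\rangle_{\mathrm{tm}}$; $\langle t,\kappa,\rho,\sigma\rangle_{\mathrm{tm}}\xrightarrow{\mathsf{appfun}}\langle 0, (t,\kappa)::\rho,\sigma\rangle_{\mathrm{ind}}$; $\langle s,\kappa_1,(t,\kappa_2)::\rho,\sigma\rangle_{\mathrm{tm}}\xrightarrow{\mathsf{app}}\langle t\,s,\max(\kappa_1,\kappa_2),\rho,\sigma\rangle_{\mathrm{tm}}$; $\langle t, 0, \epsilon, (s,e)\rangle_{\mathrm{tm}}\xrightarrow{\mathsf{done}}\langle s, (t,\varepsilon)::e, []\rangle_{\mathrm{ev}}$. The $\tau$-transitions alone form the (environment-based) KAM, written $\to_\tau$. Applicative bisimulation: a symmetric relation $\mathcal R$ on closed closures such that $(t,e)\mathcal R(s,d)$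 and $\langle t,e,[]\rangle_{\mathrm{ev}}\xrightarrow\tau^*\langle\lambda.t',e',[]\rangle_{\mathrm{ev}}$ imply there exist $s',d'$ with $\langle s,d,[]\rangle_{\mathrm{ev}}\xrightarrow\tau^*\langle\lambda.s',d',[]\rangle_{\mathrm{ev}}$ and, for all closed terms $t''$, $(t',(t'',\varepsilon)::e')\,\mathcal R\,(s',(t'',\varepsilon)::d')$. $\approx_{\mathrm{app}}$ is the largest applicative bisimulation. Machine bisimulation: a symmetric relation $\mathcal R$ on configurations such that $C_1\mathcal RC_2$ implies, for every flag $F$: if $C_1\xrightarrow\tau^*\xrightarrow F C_1'$ then $C_2\xrightarrow\tau^*\xrightarrow F C_2'$ for some $C_2'$ with $C_1'\mathcal RC_2'$; and if $C_1\xrightarrow\tau^*\xrightarrow F$ by a terminating transition, then so does $C_2$. $\approx$ is the largest machine bisimulation. *)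

From Stdlib Require Import List Arith.
Import ListNotations.

Inductive term : Type :=
| Var : nat -> term
| App : term -> term -> term
| Lam : term -> term.

Inductive clos : Type :=
| Clos : term -> list clos -> clos.

Definition env := list clos.
Definition stack := list clos.
Definition astack := list (term * nat).

Fixpoint closed_under (t : term) (n : nat) : Prop :=
  match t with
  | Var m => m < n
  | App t1 t2 => closed_under t1 n /\ closed_under t2 n
  | Lam t1 => closed_under t1 (S n)
  end.

Definition closed_term (t : term) : Prop := closed_under t 0.

Inductive closed_clos : clos -> Prop :=
| closed_clos_intro : forall t e,
    closed_under t (length e) -> Forall closed_clos e -> closed_clos (Clos t e).

Inductive config : Type :=
| Ev  : term -> env -> stack -> config
| Ind : nat -> astack -> clos -> config
| Tm  : term -> nat -> astack -> clos -> config.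

Inductive flag : Type :=
| f_arg | f_suc | f_var | f_lam | f_appfun | f_app | f_done.

(* labels: None = tau, Some F = flag F *)
Definition label := option flag.

Inductive step : config -> label -> config -> Prop :=
| st_app : forall t s e pi,
    step (Ev (App t s) e pi) None (Ev t e (Clos s e :: pi))
| st_var0 : forall t e d pi,
    step (Ev (Var 0) (Clos t e :: d) pi) None (Ev t e pi)
| st_varS : forall n c d pi,
    step (Ev (Var (S n)) (c :: d) pi) None (Ev (Var n) d pi)
| st_beta : forall t e c pi,
    step (Ev (Lam t) e (c :: pi)) None (Ev t (c :: e) pi)
| st_arg : forall t e,
    step (Ev (Lam t) e []) (Some f_arg) (Ind 0 [] (Clos t e))
| st_suc : forall n rho c,
    step (Ind n rho c) (Some f_suc) (Ind (S n) rho c)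
| st_var : forall n rho c,
    step (Ind n rho c) (Some f_var) (Tm (Var n) (S n) rho c)
| st_lamS : forall t k rho c,
    step (Tm t (S k) rho c) (Some f_lam) (Tm (Lam t) k rho c)
| st_lam0 : forall t rho c,
    step (Tm t 0 rho c) (Some f_lam) (Tm (Lam t) 0 rho c)
| st_appfun : forall t k rho c,
    step (Tm t k rho c) (Some f_appfun) (Ind 0 ((t, k) :: rho) c)
| st_app2 : forall s k1 t k2 rho c,
    step (Tm s k1 ((t, k2) :: rho) c) (Some f_app) (Tm (App t s) (Nat.max k1 k2) rho c)
| st_done : forall t s e,
    step (Tm t 0 [] (Clos s e)) (Some f_done) (Ev s (Clos t [] :: e) []).

(* the KAM: reflexive-transitive closure of tau transitions *)
Inductive tau_star : config -> config -> Prop :=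
| ts_refl : forall C, tau_star C C
| ts_step : forall C1 C2 C3, step C1 None C2 -> tau_star C2 C3 -> tau_star C1 C3.

(* terminating (target-less) flagged transitions of the AB machine:
   the AB machine has none, so this predicate is empty. *)
Definition term_step (C : config) (F : flag) : Prop := False.

Definition weak_step (C : config) (F : flag) (C' : config) : Prop :=
  exists C0, tau_star C C0 /\ step C0 (Some F) C'.

Definition weak_term (C : config) (F : flag) : Prop :=
  exists C0, tau_star C C0 /\ term_step C0 F.

Definition is_machine_bisim (R : config -> config -> Prop) : Prop :=
  (forall C1 C2, R C1 C2 -> R C2 C1) /\
  (forall C1 C2, R C1 C2 ->
     forall F,
       (forall C1', weak_step C1 F C1' ->
          exists C2', weak_step C2 F C2' /\ R C1' C2') /\
       (weak_term C1 F -> weak_term C2 F)).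

Definition mbisim (C1 C2 : config) : Prop :=
  exists R, is_machine_bisim R /\ R C1 C2.

Definition is_app_bisim (R : clos -> clos -> Prop) : Prop :=
  (forall c1 c2, R c1 c2 -> closed_clos c1 /\ closed_clos c2) /\
  (forall c1 c2, R c1 c2 -> R c2 c1) /\
  (forall t e s d, R (Clos t e) (Clos s d) ->
     forall t' e', tau_star (Ev t e []) (Ev (Lam t') e' []) ->
       exists s' d', tau_star (Ev s d []) (Ev (Lam s') d' []) /\
         forall t'', closed_term t'' ->
           R (Clos t' (Clos t'' [] :: e')) (Clos s' (Clos t'' [] :: d'))).

Definition app_bisim (c1 c2 : clos) : Prop :=
  exists R, is_app_bisim R /\ R c1 c2.

(** The only visible action of an evaluation configuration is [arg], emitted
    when the KAM reaches a weak head normal form [λ.t'] with an empty stack.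
    The machine then lets the observer write an arbitrary term [u] flag by
    flag ([suc], [var], [lam], [appfun], [app]); this writing phase is
    deterministic and the same on both sides, and [done] resumes evaluation
    of [t'] with [u] pushed onto the environment.  Hence machine bisimilar
    evaluation configurations are applicatively bisimilar: the argument chosen
    by the applicative observer is transmitted through the flags.  Conversely,
    an applicative bisimulation extends to a machine bisimulation relating
    writing-phase configurations whose λ-bodies are applicatively bisimilar
    for every closed argument; the index [κ] ensures that the written term is
    closed when [done] fires. *)

From Stdlib Require Import List Arith Lia.
Import ListNotations.

Lemma closed_under_weaken u k k' : closed_under u k -> k <= k' -> closed_under u k'.
Proof.
  revert k k'; induction u as [m | u1 IH1 u2 IH2 | u IH]; simpl; intros k k' Hu Hk.
  - lia.
  - destruct Hu; split; eauto.
  - apply (IH (S k)); [assumption | lia].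
Qed.

Lemma closed_clos_body t e u :
  closed_clos (Clos (Lam t) e) -> closed_term u -> closed_clos (Clos t (Clos u [] :: e)).
Proof.
  inversion 1; subst; intros Hu.
  constructor; [assumption |].
  constructor; [constructor; [exact Hu | constructor] | assumption].
Qed.

(* The index [κ] reached by the AB machine after writing [u]. *)
Fixpoint free_bound (u : term) : nat :=
  match u with
  | Var n => S n
  | App u1 u2 => Nat.max (free_bound u2) (free_bound u1)
  | Lam u1 => pred (free_bound u1)
  end.

Lemma free_bound_closed u k : closed_under u k -> free_bound u <= k.
Proof.
  revert k; induction u as [m | u1 IH1 u2 IH2 | u IH]; simpl; intros k Hu.
  - lia.
  - destruct Hu as [H1 H2]; specialize (IH1 _ H1); specialize (IH2 _ H2); lia.
  - specialize (IH _ Hu); lia.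
Qed.

Lemma step_flag_det C F C1 C2 : step C (Some F) C1 -> step C (Some F) C2 -> C1 = C2.
Proof. intros H1 H2; inversion H1; subst; inversion H2; subst; congruence. Qed.

Definition tau_stuck (C : config) : Prop := forall C', ~ step C None C'.

Lemma Ind_tau_stuck n r c : tau_stuck (Ind n r c).
Proof. intros C' H; inversion H. Qed.

Lemma Tm_tau_stuck u k r c : tau_stuck (Tm u k r c).
Proof. intros C' H; inversion H. Qed.

Lemma step_weak_step C F C' : step C (Some F) C' -> weak_step C F C'.
Proof. intros H; exists C; split; [constructor | exact H]. Qed.

Lemma weak_step_tau_stuck C F C' : tau_stuck C -> weak_step C F C' -> step C (Some F) C'.
Proof.
  intros Hstuck [C0 [Htau Hstep]].
  destruct Htau as [| C C1 C0 Hs _]; [exact Hstep | destruct (Hstuck _ Hs)].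
Qed.

Lemma weak_step_Ev_inv t e p F C' :
  weak_step (Ev t e p) F C' ->
  exists t' e', tau_star (Ev t e p) (Ev (Lam t') e' []) /\ F = f_arg /\ C' = Ind 0 [] (Clos t' e').
Proof.
  intros [C0 [Htau Hstep]].
  assert (HEv : exists t0 e0 p0, C0 = Ev t0 e0 p0).
  { remember (Ev t e p) as C eqn:HC; revert t e p HC.
    induction Htau as [C | C1 C2 C3 Hs _ IH]; intros t e p ->; eauto.
    inversion Hs; subst; eauto. }
  destruct HEv as (t0 & e0 & p0 & ->).
  inversion Hstep; subst; eauto.
Qed.

Definition closed_config (C : config) : Prop :=
  match C with
  | Ev t e p => closed_clos (Clos t e) /\ Forall closed_clos p
  | _ => True
  end.

Lemma tau_step_closed C C' : step C None C' -> closed_config C -> closed_config C'.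
Proof.
  intros Hs; inversion Hs; subst; simpl; intros [Hc Hpi]; inversion Hc as [? ? Ht He]; subst.
  - destruct Ht as [Ht Hs'].
    split; [constructor; assumption | constructor; [constructor |]; assumption].
  - inversion He as [| ? ? Hte]; subst; inversion Hte; auto.
  - inversion He; subst; simpl in Ht; split; [constructor; [simpl; lia | assumption] | assumption].
  - inversion Hpi; subst; split; [constructor; simpl |]; auto.
Qed.

Lemma tau_star_closed C C' : tau_star C C' -> closed_config C -> closed_config C'.
Proof. induction 1; eauto using tau_step_closed. Qed.

Lemma mbisim_is_machine_bisim : is_machine_bisim mbisim.
Proof.
  split.
  - intros C1 C2 [R [[Hsym Hsim] HR]]; exists R; split; [split |]; auto.
  - intros C1 C2 [R [[Hsym Hsim] HR]] F.
    destruct (Hsim _ _ HR F) as [Hstep Hterm]; split; [| exact Hterm].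
    intros C1' H1; destruct (Hstep _ H1) as [C2' [H2 HR']].
    exists C2'; split; [exact H2 |]; exists R; split; [split |]; auto.
Qed.

Lemma mbisim_sym C1 C2 : mbisim C1 C2 -> mbisim C2 C1.
Proof. apply mbisim_is_machine_bisim. Qed.

Lemma mbisim_step C1 C2 F C1' C2' :
  mbisim C1 C2 -> tau_stuck C2 -> step C1 (Some F) C1' -> step C2 (Some F) C2' -> mbisim C1' C2'.
Proof.
  intros H Hstuck H1 H2.
  destruct (proj1 (proj2 mbisim_is_machine_bisim C1 C2 H F) C1' (step_weak_step _ _ _ H1))
    as [C2'' [Hw H']].
  rewrite (step_flag_det _ _ _ _ H2 (weak_step_tau_stuck _ _ _ Hstuck Hw)); exact H'.
Qed.

Lemma mbisim_Ind_suc n m r c1 c2 :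
  mbisim (Ind m r c1) (Ind m r c2) -> mbisim (Ind (n + m) r c1) (Ind (n + m) r c2).
Proof.
  induction n as [| n IH]; intros H; [exact H |].
  eapply mbisim_step; [exact (IH H) | apply Ind_tau_stuck | constructor | constructor].
Qed.

Lemma mbisim_write_term u r c1 c2 :
  mbisim (Ind 0 r c1) (Ind 0 r c2) -> mbisim (Tm u (free_bound u) r c1) (Tm u (free_bound u) r c2).
Proof.
  revert r; induction u as [n | u1 IH1 u2 IH2 | u IH]; intros r H; simpl.
  - apply (mbisim_Ind_suc n) in H; rewrite Nat.add_0_r in H.
    eapply mbisim_step; [exact H | apply Ind_tau_stuck | constructor | constructor].
  - assert (Hfun : mbisim (Ind 0 ((u1, free_bound u1) :: r) c1) (Ind 0 ((u1, free_bound u1) :: r) c2)).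
    { eapply mbisim_step; [exact (IH1 r H) | apply Tm_tau_stuck | constructor | constructor]. }
    eapply mbisim_step; [exact (IH2 _ Hfun) | apply Tm_tau_stuck | constructor | constructor].
  - specialize (IH r H); destruct (free_bound u);
      (eapply mbisim_step; [exact IH | apply Tm_tau_stuck | constructor | constructor]).
Qed.

Lemma mbisim_apply t e s d u :
  mbisim (Ind 0 [] (Clos t e)) (Ind 0 [] (Clos s d)) -> closed_term u ->
  mbisim (Ev t (Clos u [] :: e) []) (Ev s (Clos u [] :: d) []).
Proof.
  intros H Hu.
  assert (Hk : free_bound u = 0) by (apply free_bound_closed in Hu; lia).
  pose proof (mbisim_write_term u [] _ _ H) as Hw; rewrite Hk in Hw.
  eapply mbisim_step; [exact Hw | apply Tm_tau_stuck | constructor | constructor].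
Qed.

Definition load (c : clos) : config := match c with Clos t e => Ev t e [] end.

Definition mbisim_clos (c1 c2 : clos) : Prop :=
  closed_clos c1 /\ closed_clos c2 /\ mbisim (load c1) (load c2).

Lemma mbisim_clos_app_bisim : is_app_bisim mbisim_clos.
Proof.
  split; [| split].
  - intros c1 c2 (H1 & H2 & _); auto.
  - intros c1 c2 (H1 & H2 & H); split; [| split]; auto using mbisim_sym.
  - intros t e s d (Hte & Hsd & H) t' e' Htau; simpl in H.
    destruct (proj1 (proj2 mbisim_is_machine_bisim _ _ H f_arg) (Ind 0 [] (Clos t' e')))
      as (C2 & Hw & H').
    { exists (Ev (Lam t') e' []); split; [exact Htau | constructor]. }
    destruct (weak_step_Ev_inv _ _ _ _ _ Hw) as (s' & d' & Htau' & _ & ->).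
    exists s', d'; split; [exact Htau' |]; intros u Hu.
    destruct (tau_star_closed _ _ Htau (conj Hte (Forall_nil _))) as [Hte' _].
    destruct (tau_star_closed _ _ Htau' (conj Hsd (Forall_nil _))) as [Hsd' _].
    split; [| split]; [apply closed_clos_body; assumption .. | apply mbisim_apply; assumption].
Qed.

Lemma app_bisim_sym c1 c2 : app_bisim c1 c2 -> app_bisim c2 c1.
Proof. intros [R [[Hc [Hsym Hsim]] HR]]; exists R; split; [split; [| split] |]; auto. Qed.

Definition app_bisim_bodies (t : term) (e : env) (s : term) (d : env) : Prop :=
  forall u, closed_term u -> app_bisim (Clos t (Clos u [] :: e)) (Clos s (Clos u [] :: d)).

Lemma app_bisim_bodies_sym t e s d : app_bisim_bodies t e s d -> app_bisim_bodies s d t e.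
Proof. intros H u Hu; apply app_bisim_sym, H, Hu. Qed.

Lemma app_bisim_lam t e s d t' e' :
  app_bisim (Clos t e) (Clos s d) -> tau_star (Ev t e []) (Ev (Lam t') e' []) ->
  exists s' d', tau_star (Ev s d []) (Ev (Lam s') d' []) /\ app_bisim_bodies t' e' s' d'.
Proof.
  intros [R [HR Hts]] Htau.
  destruct (proj2 (proj2 HR) _ _ _ _ Hts _ _ Htau) as (s' & d' & Htau' & Hbodies).
  exists s', d'; split; [exact Htau' |]; intros u Hu; exists R; auto.
Qed.

Definition closed_astack (r : astack) : Prop := Forall (fun p => closed_under (fst p) (snd p)) r.

(* In the writing phase [closed_under u k] is invariant, so the term is closed when [done] fires at [k = 0]. *)
Inductive app_bisim_config : config -> config -> Prop :=
| abc_Ev t e s d :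
    app_bisim (Clos t e) (Clos s d) -> app_bisim_config (Ev t e []) (Ev s d [])
| abc_Ind n r t e s d :
    closed_astack r -> app_bisim_bodies t e s d ->
    app_bisim_config (Ind n r (Clos t e)) (Ind n r (Clos s d))
| abc_Tm u k r t e s d :
    closed_under u k -> closed_astack r -> app_bisim_bodies t e s d ->
    app_bisim_config (Tm u k r (Clos t e)) (Tm u k r (Clos s d)).

Lemma app_bisim_config_sym C1 C2 : app_bisim_config C1 C2 -> app_bisim_config C2 C1.
Proof. destruct 1; constructor; auto using app_bisim_sym, app_bisim_bodies_sym. Qed.

Lemma app_bisim_config_weak_step C1 C2 F C1' :
  app_bisim_config C1 C2 -> weak_step C1 F C1' ->
  exists C2', weak_step C2 F C2' /\ app_bisim_config C1' C2'.
Proof.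
  destruct 1 as [t e s d H | n r t e s d Hr H | u k r t e s d Hu Hr H]; intros Hw.
  - destruct (weak_step_Ev_inv _ _ _ _ _ Hw) as (t' & e' & Htau & -> & ->).
    destruct (app_bisim_lam _ _ _ _ _ _ H Htau) as (s' & d' & Htau' & Hbodies).
    exists (Ind 0 [] (Clos s' d')); split.
    + exists (Ev (Lam s') d' []); split; [exact Htau' | constructor].
    + constructor; [constructor | exact Hbodies].
  - apply weak_step_tau_stuck in Hw; [| apply Ind_tau_stuck].
    inversion Hw; subst; eexists; (split; [apply step_weak_step; constructor |]);
      constructor; simpl; auto.
  - apply weak_step_tau_stuck in Hw; [| apply Tm_tau_stuck].
    inversion Hw; subst; eexists; (split; [apply step_weak_step; constructor |]).
    + constructor; auto.
    + constructor; simpl; eauto using closed_under_weaken.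
    + constructor; [constructor |]; auto.
    + inversion Hr as [| ? ? Ht Hr']; subst; simpl in Ht.
      constructor; [simpl; split; eapply closed_under_weaken; eauto; lia | assumption | assumption].
    + constructor; apply H, Hu.
Qed.

Lemma app_bisim_config_machine_bisim : is_machine_bisim app_bisim_config.
Proof.
  split; [exact app_bisim_config_sym |].
  intros C1 C2 H F; split; [eauto using app_bisim_config_weak_step | intros [C0 [_ []]]].
Qed.

Theorem theorem5p6 : forall (t s : term) (e d : env),
  closed_clos (Clos t e) -> closed_clos (Clos s d) ->
  (app_bisim (Clos t e) (Clos s d) <-> mbisim (Ev t e []) (Ev s d [])).
Proof.
  intros t s e d Hte Hsd; split; intros H.
  - exists app_bisim_config; split; [exact app_bisim_config_machine_bisim | constructor; exact H].
  - exists mbisim_clos; split; [exact mbisim_clos_app_bisim | split; [| split]; assumption].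
Qed.
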